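(* Let $f(x,\theta)$ be a model, differentiable in its parameters $\theta\in\mathbb{R}^d$, and let $\mathcal{L}(\hat y, y)$ be a loss function. Let $\boldsymbol{\theta^{(t-1)}} = [\theta^L,\theta^U]\subseteq\mathbb{R}^d$ be an interval parameter domain. Let $\mathcal{B}^{(t)} = \{(\tilde x^{(i)},\tilde y^{(i)})\}_{i=1}^b$ be a nominal batch of size $b$, and let $n$ be an integer with $0\le n<b$. For each $i$, let $\delta_L^{(t,i)},\delta_U^{(t,i)}\in\mathbb{R}^d$ satisfy, element-wise, $$\delta_L^{(t,i)}\le \nabla_\theta\mathcal{L}\big(f(\tilde x^{(i)},\theta'),\tilde y^{(i)}\big)\le \delta_U^{(t,i)}\quad\text{for all }\theta'\in\boldsymbol{\theta^{(t-1)}}.$$ Then for every $\theta^{(t-1)}\in\boldsymbol{\theta^{(t-1)}}$ and every perturbed batch $\tilde{\mathcal{B}}^{(t)}$ obtained from $\mathcal{B}^{(t)}$ by removing up to $n$ data points, the descent direction $$\Delta\theta^{(t)} = \frac{1}{|\tilde{\mathcal{B}}^{(t)}|}\sum_{(\tilde x^{(i)},\tilde y^{(i)})\in\tilde{\mathcal{B}}^{(t)}}\nabla_\theta\mathcal{L}\big(f(\tilde x^{(i)},\theta^{(t-1)}),\tilde y^{(i)}\big)$$ satisfies, element-wise, $\Delta\theta_L^{(t)}\le\Delta\theta^{(t)}\le\Delta\theta_U^{(t)}$, where $$\Delta\theta_L^{(t)} = \frac{1}{b-n}\,\operatorname{SEMin}_{b-n}\{\delta_L^{(t,i)}\}_{i=1}^b,\qquad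 \Delta\theta_U^{(t)} = \frac{1}{b-n}\,\operatorname{SEMax}_{b-n}\{\delta_U^{(t,i)}\}_{i=1}^b.$$
   Context: An interval domain $[\theta^L,\theta^U]\subseteq\mathbb{R}^d$ is the set of $\theta$ with $\theta^L_j\le\theta_j\le\theta^U_j$ for all $j$. For a collection of vectors $\{v^{(i)}\}_{i=1}^b\subseteq\mathbb{R}^d$ and an integer $a\le b$, $\operatorname{SEMax}_a\{v^{(i)}\}$ is the vector whose $j$-th entry is the sum of the $a$ largest values among $v^{(1)}_j,\dots,v^{(b)}_j$, and $\operatorname{SEMin}_a\{v^{(i)}\}$ is the vector whose $j$-th entry is the sum of the $a$ smallest values among $v^{(1)}_j,\dots,v^{(b)}_j$ (computed independently at each index $j$). *)

From HB Require Import structures.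
From mathcomp Require Import all_boot all_order all_algebra.
From mathcomp Require Import all_classical all_reals all_analysis.
Set Implicit Arguments. Unset Strict Implicit. Unset Printing Implicit Defensive.
Import Order.TTheory GRing.Theory Num.Theory.
Import numFieldNormedType.Exports.
Local Open Scope ring_scope.

Definition grad (R : realType) (d : nat) (F : 'rV[R]_d -> R) (th : 'rV[R]_d)
  : 'rV[R]_d := \row_j ('D_(delta_mx 0 j) F th).

Definition in_interval (R : realType) (d : nat) (thL thU th : 'rV[R]_d) : Prop :=
  forall j, thL 0 j <= th 0 j <= thU 0 j.

Definition SEMin (R : realType) (d b : nat) (a : nat) (v : 'I_b -> 'rV[R]_d)
  : 'rV[R]_d :=
  \row_j \sum_(x <- take a (sort <=%R [seq v i 0 j | i <- enum 'I_b])) x.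
Definition SEMax (R : realType) (d b : nat) (a : nat) (v : 'I_b -> 'rV[R]_d)
  : 'rV[R]_d :=
  \row_j \sum_(x <- take a (sort >=%R [seq v i 0 j | i <- enum 'I_b])) x.

From HB Require Import structures.
From mathcomp Require Import all_boot all_order all_algebra.
From mathcomp Require Import all_classical all_reals all_analysis.
Import Order.TTheory GRing.Theory Num.Theory.
Import numFieldNormedType.Exports.
Set Implicit Arguments. Unset Strict Implicit. Unset Printing Implicit Defensive.
Local Open Scope ring_scope.

(* The mean of the k smallest of the numbers a_i is at most the mean of a_i
   over any set S with at least k elements.  Let c be the k-th smallest value
   and w x := min (x - c) 0 <= 0.  The k smallest sum to k c + sum_i w (a_i),
   which is at most k c + sum_(i in S) w (a_i); and |S| w (a_i) <= k (a_i - c)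
   termwise since k <= |S|.  The bound by the k largest is this one for -a.
   The gradient enclosures then bound the mean gradient over the perturbed
   batch entrywise. *)

Lemma sorted_take_le_nth_le_drop (T : eqType) (leT : rel T) (x0 : T) (s : seq T) k :
  transitive leT -> reflexive leT -> sorted leT s -> (0 < k <= size s)%N ->
  {in take k s, forall x, leT x (nth x0 s k.-1)} /\
  {in drop k s, forall y, leT (nth x0 s k.-1) y}.
Proof.
move=> leT_tr leT_refl s_sorted /andP[k_gt0 k_le].
have le_nth i j : (i <= j < size s)%N -> leT (nth x0 s i) (nth x0 s j).
  move=> /andP[le_ij j_lt]; apply: (sorted_leq_nth leT_tr leT_refl) => //.
  by rewrite inE (leq_ltn_trans le_ij j_lt).
split=> [x /(nthP x0)[i] | y /(nthP x0)[i]].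
- rewrite size_take_min (minn_idPl k_le) => lt_ik <-; rewrite nth_take //.
  by apply: le_nth; rewrite -ltnS prednK // lt_ik (leq_trans _ k_le) // prednK.
- rewrite size_drop => lt_i <-; rewrite nth_drop; apply: le_nth.
  by rewrite -ltn_subRL (leq_trans (leq_pred k) (leq_addr _ _)).
Qed.

Lemma sum_take_threshold (R : realDomainType) (s : seq R) k c :
  (k <= size s)%N ->
  {in take k s, forall x, x <= c} -> {in drop k s, forall y, c <= y} ->
  \sum_(x <- take k s) x = k%:R * c + \sum_(x <- s) Num.min (x - c) 0.
Proof.
move=> k_le take_le drop_ge.
rewrite -[s in RHS](cat_take_drop k) big_cat /=.
have -> : \sum_(y <- drop k s) Num.min (y - c) 0 = 0.
  by rewrite big_seq big1 // => y /drop_ge; rewrite -subr_ge0 => /min_idPr.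
have -> : \sum_(x <- take k s) Num.min (x - c) 0 = \sum_(x <- take k s) (x - c).
  by rewrite !big_seq; apply: eq_bigr => x /take_le; rewrite -subr_le0 => /min_idPl.
rewrite addr0 sumrB big_const_seq count_predT iter_addr_0 size_take_min.
by rewrite (minn_idPl k_le) mulr_natl addrCA subrr addr0.
Qed.

Lemma threshold_mean_le_mean (R : realFieldType) (I : finType) (a : I -> R)
    (S : {set I}) k c :
  (0 < k)%N -> (k <= #|S|)%N ->
  k%:R^-1 * (k%:R * c + \sum_(i in S) Num.min (a i - c) 0)
    <= #|S|%:R^-1 * \sum_(i in S) a i.
Proof.
move=> k_gt0 k_le; have S_gt0 : (0 < #|S|)%N := leq_trans k_gt0 k_le.
have -> : \sum_(i in S) a i = #|S|%:R * c + \sum_(i in S) (a i - c).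
  by rewrite sumrB sumr_const mulr_natl addrC subrK.
rewrite !mulrDr !mulKf ?pnatr_eq0 -?lt0n // lerD2l !mulr_sumr.
apply: ler_sum => i _; have [le_ac | lt_ca] := leP (a i - c) 0.
- by rewrite ler_wnM2r // lef_pV2 ?posrE ?ltr0n // ler_nat.
- by rewrite mulr0 mulr_ge0 ?invr_ge0 ?ler0n ?ltW.
Qed.

Lemma mean_smallest_le_mean (R : realFieldType) (I : finType) (a : I -> R)
    (S : {set I}) k :
  (0 < k)%N -> (k <= #|S|)%N ->
  k%:R^-1 * \sum_(x <- take k (sort <=%R [seq a i | i <- enum I])) x
    <= #|S|%:R^-1 * \sum_(i in S) a i.
Proof.
move=> k_gt0 k_le; set s := sort _ _.
have s_sorted : sorted <=%R s by apply: sort_sorted; exact: le_total.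
have k_le_s : (k <= size s)%N.
  by rewrite size_sort size_map -cardE (leq_trans k_le (max_card _)).
have [take_le drop_ge] := sorted_take_le_nth_le_drop 0 le_trans lexx
  s_sorted (introT andP (conj k_gt0 k_le_s)).
rewrite (sum_take_threshold k_le_s take_le drop_ge).
apply: le_trans (threshold_mean_le_mean a s`_k.-1 k_gt0 k_le).
apply: ler_wpM2l; first by rewrite invr_ge0 ler0n.
rewrite lerD2l (perm_big _ (permEl (perm_sort _ _))) big_map big_enum /=.
rewrite [X in X <= _](bigID [in S]) /= gerDl.
by apply: sumr_le0 => i _; rewrite ge_min lexx orbT.
Qed.

Lemma mean_le_mean_largest (R : realFieldType) (I : finType) (a : I -> R)
    (S : {set I}) k :
  (0 < k)%N -> (k <= #|S|)%N ->
  #|S|%:R^-1 * \sum_(i in S) a i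
    <= k%:R^-1 * \sum_(x <- take k (sort >=%R [seq a i | i <- enum I])) x.
Proof.
move=> k_gt0 k_le; have := mean_smallest_le_mean (fun i => - a i) k_gt0 k_le.
have -> : [seq - a i | i <- enum I] = map -%R [seq a i | i <- enum I].
  exact: map_comp.
rewrite -(map_sort (@lerN2 R)) -map_take big_map !sumrN !mulrN.
by rewrite lerN2.
Qed.

Theorem mainTheorem1 (R : realType) (d b n : nat)
  (X Y O : Type) (f : X -> 'rV[R]_d -> O) (L : O -> Y -> R)
  (xs : 'I_b -> X) (ys : 'I_b -> Y)
  (hdiff : forall (i : 'I_b) (th : 'rV[R]_d),
     differentiable (fun th' => L (f (xs i) th') (ys i)) th)
  (thL thU : 'rV[R]_d)
  (hnb : (n < b)%N)
  (deltaL deltaU : 'I_b -> 'rV[R]_d)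
  (hdelta : forall (i : 'I_b) (th' : 'rV[R]_d), in_interval thL thU th' ->
     forall j, deltaL i 0 j <= grad (fun th => L (f (xs i) th) (ys i)) th' 0 j
               <= deltaU i 0 j) :
  forall (th : 'rV[R]_d), in_interval thL thU th ->
  forall (S : {set 'I_b}), (b - n <= #|S|)%N ->
  let Delta := (#|S|%:R)^-1 *:
     \sum_(i in S) grad (fun th' => L (f (xs i) th') (ys i)) th in
  forall j,
    ((b - n)%:R)^-1 * SEMin (b - n) deltaL 0 j <= Delta 0 j
    <= ((b - n)%:R)^-1 * SEMax (b - n) deltaU 0 j.
Proof.
move=> th th_in S S_large Delta j.
have k_gt0 : (0 < b - n)%N by rewrite subn_gt0.
pose g i := grad (fun th' => L (f (xs i) th') (ys i)) th 0 j.
have -> : Delta 0 j = #|S|%:R^-1 * \sum_(i in S) g i by rewrite !mxE summxE.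
have mean_le u v : (forall i, u i <= v i) ->
    #|S|%:R^-1 * \sum_(i in S) u i <= #|S|%:R^-1 * \sum_(i in S) v i.
  by move=> le_uv; rewrite ler_wpM2l ?invr_ge0 ?ler0n // ler_sum.
rewrite !mxE; apply/andP; split.
- apply: le_trans (mean_smallest_le_mean _ k_gt0 S_large) _.
  by apply: mean_le => i; case/andP: (hdelta i th th_in j).
- apply: le_trans (mean_le_mean_largest _ k_gt0 S_large).
  by apply: mean_le => i; case/andP: (hdelta i th th_in j).
Qed.
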